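(* Let $\alpha,n\in\mathbb{Q}$ with $n\neq0$. The elliptic curve $$E_{\alpha,-n^2}:\ y^2=x^3+\alpha x^2-n^2x$$ has no rational point of order $5$. *)

From mathcomp Require Import all_boot all_order all_algebra.
Set Implicit Arguments. Unset Strict Implicit. Unset Printing Implicit Defensive.
Import Order.TTheory GRing.Theory Num.Theory.
Local Open Scope ring_scope.

(* A projective point: None = point at infinity O, Some (x,y) = affine point. *)
Definition ecpt := option (rat * rat).

Definition on_curve (a b : rat) (P : ecpt) : Prop :=
  match P with
  | None => True
  | Some (x, y) => y ^+ 2 = x ^+ 3 + a * x ^+ 2 + b * x
  end.

Definition ec_add (a b : rat) (P Q : ecpt) : ecpt :=
  match P, Q with
  | None, _ => Q
  | _, None => P
  | Some (x1, y1), Some (x2, y2) =>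
      if (x1 == x2) && (y1 + y2 == 0) then None
      else
        let l := if x1 == x2
                 then (3 * x1 ^+ 2 + 2 * a * x1 + b) / (2 * y1)
                 else (y2 - y1) / (x2 - x1) in
        let x3 := l ^+ 2 - a - x1 - x2 in
        Some (x3, l * (x1 - x3) - y1)
  end.

Fixpoint ec_mul (a b : rat) (k : nat) (P : ecpt) : ecpt :=
  match k with
  | 0 => None
  | k'.+1 => ec_add a b P (ec_mul a b k' P)
  end.

Definition has_order (a b : rat) (P : ecpt) (m : nat) : Prop :=
  (0 < m)%N /\ ec_mul a b m P = None /\
  (forall k : nat, (0 < k)%N -> (k < m)%N -> ec_mul a b k P <> None).

From mathcomp Require Import all_boot all_order all_algebra.
From mathcomp Require Import zify ring lra.
Import Order.TTheory GRing.Theory Num.Theory.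
Set Implicit Arguments. Unset Strict Implicit. Unset Printing Implicit Defensive.

(* A line y = l X + m meets E at the three roots of
   X^3 + a X^2 + b X - (l X + m)^2; the group law is read off from these
   roots.  If P = (x, y) has order 5 then 4P = -P, so the chord through P and
   3P meets E twice at x: it is the tangent at P, which forces x(3P) = x(2P).
   Comparing the tangent at P (roots x, x, x2) with the chord through P and
   2P (roots x, x2, x2), Vieta's relations show that x and x2 are rational
   squares s^2, r^2 and that b = r s (r^2 + r s - s^2).

   With b = -n^2 this yields a rational point with nonzero
   ordinate on m^2 = t^3 - t^2 - t.  Clearing denominators (t = N/D) leads to
   coprime positive x, y with x^2 = z + x y + y^2 and x y z a square, hence
   x, y, z squares and a coprime solution of A^4 = W^2 + A^2 B^2 + B^4 with
   B > 0.  A two-step Fermat descent produces a solution with smaller B, so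
   none exists. *)

Lemma coprime_prime_divisors p q : 0 < p ->
  (forall l, prime l -> l %| p -> l %| q -> False) -> coprime p q.
Proof.
move=> p_gt0 noprime; rewrite /coprime eqn_leq gcdn_gt0 p_gt0 andbT leqNgt.
apply/negP => /pdivP[l pl ldiv]; apply: (noprime l pl).
- exact: dvdn_trans ldiv (dvdn_gcdl _ _).
- exact: dvdn_trans ldiv (dvdn_gcdr _ _).
Qed.

Lemma gcdn_sqr a b : gcdn (a ^ 2) (b ^ 2) = gcdn a b ^ 2.
Proof.
have [g0|g_gt0] := posnP (gcdn a b).
  have : ~~ (0 < gcdn a b) by rewrite g0.
  by rewrite gcdn_gt0 negb_or -!eqn0Ngt => /andP[/eqP-> /eqP->].
set g := gcdn a b.
have ha : a = a %/ g * g by rewrite divnK // dvdn_gcdl.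
have hb : b = b %/ g * g by rewrite divnK // dvdn_gcdr.
have cop : coprime (a %/ g) (b %/ g).
  rewrite /coprime -(eqn_pmul2l g_gt0) muln_gcdr muln1.
  by rewrite ![g * (_ %/ g)]mulnC -ha -hb.
rewrite ha hb !expnMn -muln_gcdl.
by rewrite (eqP (coprimeXl 2 (coprimeXr 2 cop))) mul1n.
Qed.

Lemma coprime_mul_sqr x y c : coprime x y -> x * y = c ^ 2 -> x = gcdn x c ^ 2.
Proof.
by move=> cxy e; rewrite -gcdn_sqr -e expnS expn1 -muln_gcdr (eqP cxy) muln1.
Qed.

Lemma coprime_mul_quart x y c : coprime x y -> x * y = c ^ 4 ->
  exists u v, [/\ x = u ^ 4, y = v ^ 4 & c = u * v].
Proof.
move=> cxy e.
have e2 : x * y = (c ^ 2) ^ 2 by rewrite -expnM.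
have cyx : coprime y x by rewrite coprime_sym.
have hx := coprime_mul_sqr cxy e2.
have hy := coprime_mul_sqr cyx (etrans (mulnC y x) e2).
set g := gcdn x _ in hx; set h := gcdn y _ in hy.
have cgh : coprime g h.
  have : coprime (g ^ 2) (h ^ 2) by rewrite -hx -hy.
  by rewrite coprime_pexpl // coprime_pexpr.
have egh : g * h = c ^ 2.
  by apply/eqP; rewrite -(eqn_exp2r _ _ (isT : 0 < 2)) expnMn -hx -hy e2.
have hg := coprime_mul_sqr cgh egh.
have hh : h = gcdn h c ^ 2.
  by apply: (coprime_mul_sqr (y := g)); rewrite 1?coprime_sym 1?mulnC.
exists (gcdn g c), (gcdn h c); split; first by rewrite hx {1}hg -expnM.
  by rewrite hy {1}hh -expnM.
by apply/eqP; rewrite -(eqn_exp2r _ _ (isT : 0 < 2)) expnMn -hg -hh egh.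
Qed.

Lemma coprime_mul_5quart p q c : coprime p q -> p * q = 5 * c ^ 4 ->
  exists u v, [/\ c = u * v, coprime u v &
    (p = 5 * u ^ 4 /\ q = v ^ 4) \/ (p = u ^ 4 /\ q = 5 * v ^ 4)].
Proof.
move=> cpq e; wlog /dvdnP[p' hp] : p q cpq e / 5 %| p => [sym|].
  have : 5 %| p * q by rewrite e dvdn_mulr.
  rewrite Euclid_dvdM // => /orP[|q5]; first exact: sym.
  have cqp : coprime q p by rewrite coprime_sym.
  have eqp : q * p = 5 * c ^ 4 by rewrite mulnC.
  have [u [v [huv cuv hqp]]] := sym q p cqp eqp q5.
  exists v, u; split; [by rewrite mulnC | by rewrite coprime_sym |].
  by case: hqp => -[-> ->]; [right | left].
have cp'q : coprime p' q by apply: coprime_dvdl cpq; rewrite hp dvdn_mulr.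
have [u [v [hu hv hc]]] : exists u v, [/\ p' = u ^ 4, q = v ^ 4 & c = u * v].
  apply: coprime_mul_quart cp'q _; apply/eqP.
  by rewrite -(eqn_pmul2l (isT : 0 < 5)) mulnA (mulnC 5) -hp e.
exists u, v; split => //; last by left; rewrite hp hu mulnC.
by rewrite -(coprime_pexpl (k := 4)) // -(coprime_pexpr (k := 4)) // -hu -hv.
Qed.

Lemma sqr_diff_factor X Y K : X ^ 2 = Y ^ 2 + 4 * K -> 0 < K ->
  exists2 c, 0 < c & X = Y + 2 * c /\ c * (Y + c) = K.
Proof.
move=> E K_gt0.
have YX : Y < X by rewrite -(ltn_exp2r _ _ (isT : 0 < 2)) E; lia.
have par : odd X = odd Y.
  by have := congr1 odd E; rewrite oddD oddM !oddX /= addbF.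
have hXY : X - Y = ((X - Y)./2).*2.
  by rewrite -[LHS]odd_double_half oddB ?(ltnW YX) // par addbb.
set c := (X - Y)./2 in hXY; have hX : X = Y + 2 * c by rewrite -mul2n in hXY; lia.
clearbody c.
exists c; first by lia.
split => //; subst X; apply/eqP; rewrite -(eqn_pmul2l (isT : 0 < 4)).
by rewrite -(eqn_add2l (Y ^ 2)) -E; apply/eqP; ring.
Qed.

Lemma sqrn_mod4 x : exists q, x ^ 2 = 4 * q + odd x.
Proof.
exists (x./2 ^ 2 + x./2 * odd x).
by rewrite -{1}(odd_double_half x) -mul2n; case: (odd x) => /=; ring.
Qed.

(* In a solution of A^4 = W^2 + A^2 B^2 + B^4, B is even (reduce mod 4). *)
Lemma quartic_even A B W : A ^ 4 = W ^ 2 + A ^ 2 * B ^ 2 + B ^ 4 -> ~~ odd B.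
Proof.
move=> E; apply/negP => oB.
have [qa ha] := sqrn_mod4 (A ^ 2); have [qb hb] := sqrn_mod4 (B ^ 2).
have [qw hw] := sqrn_mod4 W; have [qab hab] := sqrn_mod4 (A * B).
have sq2 x : x ^ 4 = (x ^ 2) ^ 2 by rewrite -expnM.
move: E; rewrite !sq2 -expnMn ha hb hw hab !oddX /= oddM oB andbT.
by case: (odd A); case: (odd W); lia.
Qed.

Lemma quartic_shift A W b : 0 < b ->
  A ^ 4 = W ^ 2 + A ^ 2 * (2 * b) ^ 2 + (2 * b) ^ 4 ->
  exists S, A ^ 2 = S + 2 * b ^ 2 /\ S ^ 2 = W ^ 2 + 4 * (5 * b ^ 4).
Proof.
move=> b_gt0 E.
have E2 : (A ^ 2) ^ 2 = W ^ 2 + A ^ 2 * (4 * b ^ 2) + 16 * b ^ 4.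
  by rewrite -expnM E; ring.
have b4_gt0 : 0 < b ^ 4 by rewrite expn_gt0 b_gt0.
have A2b : 2 * b ^ 2 <= A ^ 2.
  rewrite leqNgt; apply/negP => lt.
  have : (A ^ 2) ^ 2 <= A ^ 2 * (2 * b ^ 2).
    by rewrite expnS expn1 leq_mul2l (ltnW lt) orbT.
  by rewrite E2; lia.
set S := A ^ 2 - 2 * b ^ 2; have hS : A ^ 2 = S + 2 * b ^ 2 by rewrite subnK.
clearbody S.
exists S; split => //; apply/eqP; rewrite -(eqn_add2r (4 * b ^ 2 * S + 4 * b ^ 4)).
have -> : S ^ 2 + (4 * b ^ 2 * S + 4 * b ^ 4) = (S + 2 * b ^ 2) ^ 2 by ring.
by rewrite -hS E2 hS; apply/eqP; ring.
Qed.

(* First descent step: B = 2uv and A^2 = u^4 + 2u^2v^2 + 5v^4.  Factor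
   S^2 - W^2 = 20 b^4 as (2p)(2q) with q = W + p; p and q are coprime, and
   one of them is 5 times a fourth power, the other a fourth power. *)
Lemma quartic_first_descent A B W : 0 < B -> coprime A B ->
  A ^ 4 = W ^ 2 + A ^ 2 * B ^ 2 + B ^ 4 ->
  exists u v, [/\ 0 < v, coprime u v, B = 2 * (u * v)
    & A ^ 2 = u ^ 4 + 2 * u ^ 2 * v ^ 2 + 5 * v ^ 4].
Proof.
move=> B_gt0 cAB E.
have [b hB] : exists b, B = 2 * b.
  by exists B./2; rewrite -[LHS]odd_double_half (negbTE (quartic_even E)) -mul2n.
have b_gt0 : 0 < b by lia.
rewrite hB in E; have {E} [S [hS ES]] := quartic_shift b_gt0 E.
have b4_gt0 : 0 < 5 * b ^ 4 by rewrite muln_gt0 expn_gt0 b_gt0.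
have [p p_gt0 [hSp hpq]] := sqr_diff_factor ES b4_gt0.
(* a prime dividing b and S divides A, contradicting gcd A B = 1 *)
have cbS l : prime l -> l %| b -> l %| S -> False.
  move=> pl lb lS; have : l %| A ^ 2 by rewrite hS dvdn_add // dvdn_mull // dvdn_exp.
  rewrite Euclid_dvdX // andbT => lA.
  by move: (coprime_dvdl lA cAB); rewrite prime_coprime // hB dvdn_mull.
(* a common prime of p and W + p divides S and 5 b^4; if it is 5 then 25
   divides 5 b^4, so in any case it divides b *)
have cpq : coprime p (W + p).
  apply: coprime_prime_divisors => // l pl lp lq; apply: (cbS l pl); last first.
    have -> : S = (W + p) + p by lia.
    by rewrite dvdn_add.
  have : l %| 5 * b ^ 4 by rewrite -hpq dvdn_mulr.
  rewrite Euclid_dvdM // Euclid_dvdX // andbT => /orP[l5|//].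
  have l5' : l = 5 by apply/eqP; rewrite -dvdn_prime2.
  subst l; have : 5 * 5 %| 5 * b ^ 4 by rewrite -hpq dvdn_mul.
  by rewrite dvdn_pmul2l // Euclid_dvdX // andbT.
have hS' : A ^ 2 = p + (W + p) + 2 * b ^ 2 by rewrite hS; lia.
have [u [v [huv cuv [[hp hq]|[hp hq]]]]] := coprime_mul_5quart cpq hpq.
- exists v, u; split; [lia | by rewrite coprime_sym | by rewrite hB huv (mulnC u v) |].
  by rewrite hS' hq hp huv expnMn; ring.
- exists u, v; split; [lia | by [] | by rewrite hB huv |].
  by rewrite hS' hq hp huv expnMn; ring.
Qed.

(* Second descent step: with T = u^2 + v^2, A^2 - T^2 = 4 v^4 factors as
   c (T + c) = v^4 with coprime factors c = f^4, T + c = e^4, v = e f; this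
   gives the smaller solution (e, f, u) of the original equation. *)
Lemma quartic_second_descent A u v : 0 < v -> coprime u v ->
  A ^ 2 = u ^ 4 + 2 * u ^ 2 * v ^ 2 + 5 * v ^ 4 ->
  exists e f, [/\ 0 < f, f <= v, coprime e f & e ^ 4 = u ^ 2 + e ^ 2 * f ^ 2 + f ^ 4].
Proof.
move=> v_gt0 cuv E.
set T := u ^ 2 + v ^ 2.
have EA : A ^ 2 = T ^ 2 + 4 * v ^ 4 by rewrite E /T; ring.
have v4_gt0 : 0 < v ^ 4 by rewrite expn_gt0 v_gt0.
have [c c_gt0 [_ hc]] := sqr_diff_factor EA v4_gt0.
(* a prime dividing c and T + c divides v and T, hence u and v *)
have ccT : coprime c (T + c).
  apply: coprime_prime_divisors => // l pl lc lTc.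
  have : l %| v ^ 4 by rewrite -hc dvdn_mulr.
  rewrite Euclid_dvdX // andbT => lv.
  have lv2 : l %| v ^ 2 by rewrite dvdn_exp.
  have : l %| u ^ 2 by rewrite -(dvdn_addl _ lv2) -(dvdn_addl _ lc).
  rewrite Euclid_dvdX // andbT => lu.
  by move: (coprime_dvdl lu cuv); rewrite prime_coprime // lv.
have [f [e [hf he hv]]] := coprime_mul_quart ccT hc.
have e_gt0 : 0 < e by move: v_gt0; rewrite hv muln_gt0 => /andP[].
exists e, f; split.
- by move: v_gt0; rewrite hv muln_gt0 => /andP[].
- by rewrite hv leq_pmulr.
- by rewrite -(coprime_pexpl (k := 4)) // -(coprime_pexpr (k := 4)) // -hf -he coprime_sym.
- by rewrite -he /T hf hv expnMn; ring.
Qed.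

Lemma no_quartic_solution A B W : 0 < B -> coprime A B ->
  A ^ 4 <> W ^ 2 + A ^ 2 * B ^ 2 + B ^ 4.
Proof.
elim/ltn_ind: B A W => B IH A W B_gt0 cAB E.
have [u [v [v_gt0 cuv hB EA]]] := quartic_first_descent B_gt0 cAB E.
have [e [f [f_gt0 fv cef E']]] := quartic_second_descent v_gt0 cuv EA.
apply: (IH f _ e u f_gt0 cef E'); apply: (leq_ltn_trans fv).
by move: B_gt0; rewrite hB; nia.
Qed.

(* If x^2 = z + x y + y^2 with x, y coprime then x, y, z are pairwise coprime,
   so x y z can only be a square if all three are, which the descent forbids. *)
Lemma no_coprime_triple x y z k : 0 < x -> 0 < y -> coprime x y ->
  x ^ 2 = z + x * y + y ^ 2 -> x * y * z <> k ^ 2.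
Proof.
move=> x_gt0 y_gt0 cxy E K.
have cxz : coprime x z.
  apply: coprime_prime_divisors => // l pl lx lz.
  have : l %| z + x * y + y ^ 2 by rewrite -E dvdn_exp.
  rewrite (dvdn_addr _ (dvdn_add lz (dvdn_mulr _ lx))) Euclid_dvdX // andbT => ly.
  by move: (coprime_dvdl lx cxy); rewrite prime_coprime // ly.
have cyz : coprime y z.
  apply: coprime_prime_divisors => // l pl ly lz.
  have : l %| x ^ 2 by rewrite E dvdn_add ?dvdn_add ?dvdn_mull ?dvdn_exp.
  rewrite Euclid_dvdX // andbT => lx.
  by move: (coprime_dvdl lx cxy); rewrite prime_coprime // ly.
have hx : x = gcdn x k ^ 2.
  by apply: (coprime_mul_sqr (y := y * z)); rewrite ?coprimeMr ?cxy ?cxz // mulnA.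
have hyz : y * z = gcdn (y * z) k ^ 2.
  by apply: (coprime_mul_sqr (y := x)); [rewrite coprime_sym coprimeMr cxy | rewrite -K; ring].
have hy := coprime_mul_sqr cyz hyz.
have hz : z = gcdn z (gcdn (y * z) k) ^ 2.
  by apply: (coprime_mul_sqr (y := y)); rewrite 1?coprime_sym // mulnC.
set U := gcdn x k in hx; set V := gcdn y _ in hy; set W := gcdn z _ in hz.
apply: (@no_quartic_solution U V W).
- by rewrite lt0n; apply: contraTneq y_gt0 => V0; rewrite hy V0.
- by rewrite -(coprime_pexpl (k := 2)) // -(coprime_pexpr (k := 2)) // -hx -hy.
- have sq2 n : n ^ 4 = (n ^ 2) ^ 2 by rewrite -expnM.
  by rewrite !sq2 -hx -hy -hz E.
Qed.

Local Open Scope ring_scope.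

Lemma int_of_rat_square (M : rat) (K : int) :
  M ^+ 2 = K%:~R -> exists k : nat, `|K|%N = (k ^ 2)%N.
Proof.
move=> EM; set p := numq M; set q := denq M.
have hM : M * q%:~R = p%:~R by rewrite -{1}(divq_num_den M) mulfVK // intr_eq0 gt_eqF.
have Epq : p ^+ 2 = K * q ^+ 2.
  by apply: (@intr_inj rat); rewrite rmorphXn /= -hM rmorphM /= rmorphXn /= -EM; ring.
have Eabs : (`|p| ^ 2 = `|K| * `|q| ^ 2)%N by rewrite -!abszX Epq abszM.
have q1 : `|q|%N = 1%N.
  have qp : (`|q| %| `|p| ^ 2)%N by rewrite Eabs dvdn_mull // dvdn_exp.
  have : coprime `|q| (`|p| ^ 2) by rewrite coprimeXr // coprime_sym coprime_num_den.
  by rewrite /coprime (gcdn_idPl qp) => /eqP.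
by exists `|p|%N; rewrite Eabs q1 exp1n muln1.
Qed.

Lemma no_int_triple (x y z : int) (k : nat) : 0 < x -> 0 < y -> coprime `|x| `|y| ->
  x ^+ 2 = z + x * y + y ^+ 2 -> x * y * z = (k ^ 2)%N%:Z -> False.
Proof.
move=> x_gt0 y_gt0 cxy E K.
have z_ge0 : 0 <= z by rewrite -(pmulr_rge0 _ (mulr_gt0 x_gt0 y_gt0)) K.
apply: (@no_coprime_triple `|x| `|y| `|z| k); rewrite ?absz_gt0 ?gt_eqF //.
  by move: E; rewrite !expr2; lia.
by rewrite -!abszM K.
Qed.

(* The curve m^2 = t^3 - t^2 - t has no rational point with m <> 0.  With
   t = N / D and Z = N^2 - N D - D^2, the integer N D Z is a square; the sign
   of N decides which of (N, D, Z) and (D, -N, -Z) is a positive triple. *)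
Lemma no_rational_point (t m : rat) : m != 0 -> m ^+ 2 <> t ^+ 3 - t ^+ 2 - t.
Proof.
move=> m0 Em; set N := numq t; set D := denq t.
have D_gt0 : 0 < D := denq_gt0 t.
have ht : t = N%:~R / D%:~R by rewrite divq_num_den.
set Z := N ^+ 2 - N * D - D ^+ 2.
have EM : (m * D%:~R ^+ 2) ^+ 2 = (N * D * Z)%:~R.
  rewrite exprMn Em ht /Z !rmorphM /= !rmorphB /= !rmorphXn /= rmorphM /=.
  by field; rewrite intr_eq0 gt_eqF.
have [k hk] := int_of_rat_square EM.
have K_gt0 : 0 < N * D * Z.
  rewrite -(ltr_int rat) -EM lt_def sqr_ge0 andbT sqrf_eq0.
  by rewrite mulf_neq0 // expf_neq0 // intr_eq0 gt_eqF.
have {}hk : N * D * Z = (k ^ 2)%N%:Z by rewrite -hk gez0_abs // ltW.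
have cND : coprime `|N| `|D| := coprime_num_den t.
have [N_lt0|N_gt0|N0] := ltgtP N 0.
- apply: (@no_int_triple D (- N) (- Z) k); rewrite ?oppr_gt0 ?abszN 1?coprime_sym //.
    by rewrite /Z; ring.
  by rewrite -hk; ring.
- by apply: (@no_int_triple N D Z k); rewrite // /Z; ring.
- by move: K_gt0; rewrite N0 !mul0r ltxx.
Qed.

Definition ec_cubic (a b x : rat) : rat := x ^+ 3 + a * x ^+ 2 + b * x.

(* The line y = l X + m meets E_{a,b} exactly at the abscissae u, v, w
   (with multiplicity): the cubic minus the squared line factors accordingly. *)
Definition line_cuts (a b l m u v w : rat) : Prop :=
  forall X : rat, ec_cubic a b X - (l * X + m) ^+ 2 = (X - u) * (X - v) * (X - w).

Lemma sqr_of_mul_sqr (u v m : rat) : u != 0 -> u * u * v = m ^+ 2 -> v = (m / u) ^+ 2.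
Proof. by move=> u0 h; rewrite expr_div_n -h; field. Qed.

Section ChordTangent.
Variables a b : rat.
Implicit Types x y l m u v w : rat.

Lemma line_cuts_rot l m u v w : line_cuts a b l m u v w -> line_cuts a b l m v w u.
Proof. by move=> c X; rewrite c; ring. Qed.

Lemma line_cuts_on_curve l m u v w :
  line_cuts a b l m u v w -> (- (l * w + m)) ^+ 2 = ec_cubic a b w.
Proof. by move=> /(_ w) /eqP; rewrite subrr mulr0 subr_eq0 sqrrN => /eqP. Qed.

(* Vieta's relations, read off at X = 0, 1, -1. *)
Lemma line_cuts_vieta l m u v w : line_cuts a b l m u v w ->
  [/\ u + v + w = l ^+ 2 - a, u * v + v * w + w * u = b - 2 * l * m
    & u * v * w = m ^+ 2].
Proof.
move=> c; have := c 0; have := c 1; have := c (-1); rewrite /ec_cubic => h1 h2 h3.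
by split; lra.
Qed.

(* The tangent at (x, y) meets the curve twice at x.  The residual is linear
   in X and vanishes together with its derivative at x. *)
Lemma tangent_cuts x y l : y ^+ 2 = ec_cubic a b x ->
  l * (2 * y) = 3 * x ^+ 2 + 2 * a * x + b ->
  line_cuts a b l (y - l * x) x x (l ^+ 2 - a - x - x).
Proof.
move=> onP hl X.
have -> : ec_cubic a b X - (l * X + (y - l * x)) ^+ 2 =
    (X - x) * (X - x) * (X - (l ^+ 2 - a - x - x)) + (ec_cubic a b x - y ^+ 2)
    + (X - x) * (3 * x ^+ 2 + 2 * a * x + b - l * (2 * y)) by rewrite /ec_cubic; ring.
by rewrite onP hl !subrr mulr0 !addr0.
Qed.

(* The chord through two points with distinct abscissae.  The residual is
   linear in X and vanishes at x1 and x2. *)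
Lemma chord_cuts x1 y1 x2 y2 l : x1 != x2 ->
  y1 ^+ 2 = ec_cubic a b x1 -> y2 ^+ 2 = ec_cubic a b x2 -> l * (x2 - x1) = y2 - y1 ->
  line_cuts a b l (y1 - l * x1) x1 x2 (l ^+ 2 - a - x1 - x2).
Proof.
move=> nx on1 on2 hl X.
have hy2 : l * x2 + (y1 - l * x1) = y2 by rewrite -(subrK y1 y2) -hl; ring.
set w := l ^+ 2 - a - x1 - x2.
have : (x2 - x1) * (ec_cubic a b X - (l * X + (y1 - l * x1)) ^+ 2
                    - (X - x1) * (X - x2) * (X - w)) =
    (ec_cubic a b x1 - y1 ^+ 2) * (x2 - X)
    + (ec_cubic a b x2 - (l * x2 + (y1 - l * x1)) ^+ 2) * (X - x1).
  by rewrite /w /ec_cubic; ring.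
rewrite hy2 -on1 -on2 !subrr !mul0r addr0 => /eqP.
by rewrite mulf_eq0 subr_eq0 eq_sym (negbTE nx) subr_eq0 => /eqP.
Qed.

Lemma tangent_unique x y l m w l' m' w' : y != 0 ->
  y = l * x + m -> y = l' * x + m' ->
  line_cuts a b l m x x w -> line_cuts a b l' m' x x w' -> w = w'.
Proof.
move=> y0 hy hy' c c'.
have hm : m = y - l * x by rewrite hy; ring.
have hm' : m' = y - l' * x by rewrite hy'; ring.
subst m m'.
have := c (x + 1); have := c (x - 1); have := c' (x + 1); have := c' (x - 1).
rewrite /ec_cubic => h1 h2 h3 h4.
have y4 : 4 * y != 0 by rewrite mulf_neq0.
have /eqP : (l' - l) * (4 * y) = 0 by lra.
rewrite mulf_eq0 (negbTE y4) orbF subr_eq0 => /eqP ll.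
by subst l'; lra.
Qed.

(* P = (x, y) lies on the tangent (l, m), with roots
   x, x, x2, and on the chord (l3, m3) with roots x2, x2, x; the two lines
   pass through the mirror images (x2, -+y2).  Then x = s^2, x2 = r^2 and b
   has the stated form. *)
Lemma order5_coefficient x y l m x2 l3 m3 : y != 0 ->
  y = l * x + m -> y = l3 * x + m3 -> l * x2 + m = - (l3 * x2 + m3) ->
  line_cuts a b l m x x x2 -> line_cuts a b l3 m3 x2 x2 x ->
  exists r s : rat, b = r * s * (r ^+ 2 + r * s - s ^+ 2).
Proof.
move=> y0 hP hP3 h2 tan ch.
have [s1 p1 t1] := line_cuts_vieta tan; have [s3 _ t3] := line_cuts_vieta ch.
have x0 : x != 0.
  apply: contra_neq y0 => x0.
  have /eqP : m ^+ 2 = 0 by rewrite -t1 x0 !mul0r.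
  by rewrite expf_eq0 /= hP x0 mulr0 add0r => /eqP.
have x20 : x2 != 0.
  apply/eqP => x20.
  have /eqP : m ^+ 2 = 0 by rewrite -t1 x20 mulr0.
  have /eqP : m3 ^+ 2 = 0 by rewrite -t3 x20 !mul0r.
  rewrite !expf_eq0 /= => /eqP m30 /eqP m0.
  have ll3 : l = l3 by apply: (mulIf x0); rewrite -[_ * x]addr0 -m0 -hP hP3 m30 addr0.
  by apply/(negP x0)/eqP; subst; lra.
set r := m / x; set s := m3 / x2.
have hx2 : x2 = r ^+ 2 := sqr_of_mul_sqr x0 t1.
have hx : x = s ^+ 2 := sqr_of_mul_sqr x20 t3.
have hm : m = r * s ^+ 2 by rewrite -hx /r divfK.
have hm3 : m3 = s * r ^+ 2 by rewrite -hx2 /s divfK.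
have r0 : r != 0 by apply: contra_neq x20 => r0; rewrite hx2 r0 expr0n.
have s0 : s != 0 by apply: contra_neq x0 => s0; rewrite hx s0 expr0n.
(* the slopes are linear in r, s: both lines pass through P ... *)
have E1 : s * (l - l3) = r ^+ 2 - r * s.
  apply: (mulfI s0); move: hP3; rewrite hP hx hm hm3 => h; lra.
(* ... and they meet the vertical X = x2 at opposite heights *)
have E2 : r * (l + l3) = - s ^+ 2 - r * s.
  apply: (mulfI r0); move: h2; rewrite hx2 hm hm3 => h; lra.
have -> : b = s ^+ 4 + 2 * s ^+ 2 * r ^+ 2 + s * (r * (s * (l - l3)) + s * (r * (l + l3))).
  by move: p1; rewrite hx hx2 hm => h; lra.
by exists r, s; rewrite E1 E2; ring.
Qed.

Lemma ec_double_tangent x y : y != 0 -> y ^+ 2 = ec_cubic a b x ->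
  exists l m w, [/\ y = l * x + m, line_cuts a b l m x x w
    & ec_mul a b 2 (Some (x, y)) = Some (w, - (l * w + m))].
Proof.
move=> y0 onP; set l := (3 * x ^+ 2 + 2 * a * x + b) / (2 * y).
have y20 : 2 * y != 0 by rewrite mulf_neq0.
exists l, (y - l * x), (l ^+ 2 - a - x - x); split; first by ring.
  by apply: tangent_cuts; rewrite // /l divfK.
have yy : y + y != 0 by rewrite -mulr2n -mulr_natl.
by rewrite /= eqxx /= (negbTE yy) -/l; congr (Some (_, _)); ring.
Qed.

Lemma ec_add_chord x1 y1 x2 y2 : x1 != x2 ->
  y1 ^+ 2 = ec_cubic a b x1 -> y2 ^+ 2 = ec_cubic a b x2 ->
  exists l m w, [/\ y1 = l * x1 + m, y2 = l * x2 + m, line_cuts a b l m x1 x2 w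
    & ec_add a b (Some (x1, y1)) (Some (x2, y2)) = Some (w, - (l * w + m))].
Proof.
move=> nx on1 on2; set l := (y2 - y1) / (x2 - x1).
have hl : l * (x2 - x1) = y2 - y1 by rewrite /l divfK // subr_eq0 eq_sym.
exists l, (y1 - l * x1), (l ^+ 2 - a - x1 - x2); split; first by ring.
- by rewrite -(subrK y1 y2) -hl; ring.
- exact: chord_cuts nx on1 on2 hl.
by rewrite /= (negbTE nx) -/l; congr (Some (_, _)); ring.
Qed.

Lemma ec_add_same_x x y (y' : rat) : y != 0 ->
  ec_add a b (Some (x, y)) (Some (x, y')) = None \/
  ec_add a b (Some (x, y)) (Some (x, y')) = ec_add a b (Some (x, y)) (Some (x, y)).
Proof.
move=> y0; have yy : y + y != 0 by rewrite -mulr2n -mulr_natl mulf_neq0.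
by rewrite /= eqxx /= (negbTE yy); case: ifP; [left | right].
Qed.

Lemma ec_add_eq_none x1 y1 x2 y2 :
  ec_add a b (Some (x1, y1)) (Some (x2, y2)) = None -> x1 = x2.
Proof. by rewrite /=; case: eqP. Qed.

Lemma ec_mulS k P : ec_mul a b k.+1 P = ec_add a b P (ec_mul a b k P).
Proof. by []. Qed.

(* The multiples of P form an orbit of Q |-> P + Q, so a coincidence between
   two multiples propagates. *)
Lemma ec_mul_shift P i j k :
  ec_mul a b i P = ec_mul a b j P -> ec_mul a b (k + i) P = ec_mul a b (k + j) P.
Proof. by move=> e; elim: k => // k IH; rewrite !addSn !ec_mulS IH. Qed.

Lemma has_order_inj P n i j : has_order a b P n -> (0 < j)%N -> (j < i <= n)%N ->
  ec_mul a b i P <> ec_mul a b j P.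
Proof.
move=> [_ [Pn Pk]] j0 /andP[ji i_n] e.
apply: (Pk (n - i + j)%N); [by rewrite addn_gt0 j0 orbT | by lia |].
by rewrite -(ec_mul_shift _ e) subnK.
Qed.

(* Hence, for P = (x, y) of order n and 1 < k < n - 1, the multiple kP is
   not on the vertical through P: otherwise (k + 1)P would be O or 2P. *)
Lemma has_order_x_neq x y (x' y' : rat) k n : has_order a b (Some (x, y)) n ->
  y != 0 -> (1 < k)%N -> (k.+1 < n)%N ->
  ec_mul a b k (Some (x, y)) = Some (x', y') -> x != x'.
Proof.
move=> ord y0 k1 kn ek; apply/eqP => xx; subst x'.
have [_ [_ Pk]] := ord.
have [e|e] := ec_add_same_x x y' y0.
  by apply: (Pk k.+1) => //; rewrite ec_mulS ek.
by apply: (has_order_inj (i := k.+1) (j := 2) ord) => //; [lia | rewrite ec_mulS ek].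
Qed.

End ChordTangent.

(* With b = -n^2 the coefficient form above gives a rational point on
   m^2 = t^3 - t^2 - t with m <> 0, namely t = s / r, m = n / r^2. *)
Lemma neg_sqr_neq_order5_coefficient (n r s : rat) : n != 0 ->
  - n ^+ 2 <> r * s * (r ^+ 2 + r * s - s ^+ 2).
Proof.
move=> n0 hb.
have r0 : r != 0.
  by apply: contra_neq n0 => r0; move/eqP: hb; rewrite r0 !mul0r oppr_eq0 expf_eq0 => /eqP.
apply: (@no_rational_point (s / r) (n / r ^+ 2)); first by rewrite mulf_neq0 ?invr_eq0 ?expf_neq0.
have hn2 : n ^+ 2 = - (r * s * (r ^+ 2 + r * s - s ^+ 2)) by rewrite -hb opprK.
by rewrite expr_div_n hn2; field.
Qed.

Theorem proposition7p7 (alpha n : rat) (hn : n != 0) (P : ecpt) :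
  on_curve alpha (- n ^+ 2) P -> ~ has_order alpha (- n ^+ 2) P 5.
Proof.
set b := - n ^+ 2 => onP ord; have [_ [P5 Pk]] := ord.
case: P onP ord P5 Pk => [[x y]|] onP ord P5 Pk; last exact: (Pk 1%N).
have y0 : y != 0 by apply/eqP => y0; apply: (Pk 2%N) => //; rewrite /= y0 addr0 eqxx.
(* 2P comes from the tangent at P, 3P and 4P from chords through P *)
have [l [m [x2 [hP tan e2]]]] := ec_double_tangent y0 onP.
have nx2 := has_order_x_neq (k := 2) ord y0 isT isT e2.
have [l3 [m3 [x3 [hP3 h23 ch3 e3]]]] := ec_add_chord nx2 onP (line_cuts_on_curve tan).
have {}e3 : ec_mul alpha b 3 (Some (x, y)) = Some (x3, - (l3 * x3 + m3)).
  by rewrite ec_mulS e2 e3.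
have nx3 := has_order_x_neq (k := 3) ord y0 isT isT e3.
have [l4 [m4 [x4 [hP4 _ ch4 e4]]]] := ec_add_chord nx3 onP (line_cuts_on_curve ch3).
(* 5P = O forces x4 = x, so the chord through P and 3P is the tangent at P *)
have x4x : x4 = x.
  apply/esym/(ec_add_eq_none (y1 := y) (y2 := - (l4 * x4 + m4))).
  by rewrite -e4 -e3; exact: P5.
subst x4; have x32 := tangent_unique y0 hP4 hP (line_cuts_rot (line_cuts_rot ch4)) tan.
subst x3; have h2 : l * x2 + m = - (l3 * x2 + m3) by rewrite -h23 opprK.
have [r [s hb]] := order5_coefficient y0 hP hP3 h2 tan (line_cuts_rot ch3).
exact: neg_sqr_neq_order5_coefficient hn hb.
Qed.
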